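(* Let $N \geq 1$ be an integer and let $\pi : \{0,1,\dots,N-1\} \to \{0,1,\dots,N-1\}$ be any function. Then $\pi$ is a Hamiltonian cycle, i.e. $\pi$ is a permutation of $\{0,1,\dots,N-1\}$ consisting of a single cycle of length $N$, if and only if both of the following hold: (1) $\pi^j(0) \neq 0$ for every integer $j$ with $1 \leq j \leq N-1$ and $j \mid N$; and (2) $\pi^N(0) = 0$.
   Context: $\pi^j$ denotes the $j$-fold composition of $\pi$ with itself, and $j \mid N$ means $j$ divides $N$. In the paper, $\pi$ encodes a candidate traveling-salesman tour on $N$ cities: $\pi(i)$ is the city visited immediately after city $i$; the tour is a legal Hamiltonian cycle exactly when $\pi$ is a cyclic permutation of length $N$. *)

From mathcomp Require Import all_boot.
Set Implicit Arguments. Unset Strict Implicit. Unset Printing Implicit Defensive.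

(* A function pi on the N cities {0,...,N-1} (the ordinal type 'I_N) is a
   Hamiltonian cycle when it is a permutation (injective on a finite type)
   consisting of a single cycle of length N, i.e. the cycle of pi through
   every city x has exactly N elements ([order pi x] from fingraph is the
   size of the pi-orbit of x). *)
Definition hamiltonian_cycle (N : nat) (pi : 'I_N -> 'I_N) : Prop :=
  injective pi /\ forall x : 'I_N, order pi x = N.

From mathcomp Require Import all_boot.
Set Implicit Arguments. Unset Strict Implicit. Unset Printing Implicit Defensive.

(* Once some iterate returns x to itself, x lies on a cycle of length order f x,
   and every return time is a multiple of that length.  So the hypotheses say
   exactly that the cycle through city 0 has length N, i.e. visits every city;
   a cycle covering the whole finite set makes f injective with a single orbit. *)

Section PeriodicPoint.

Variables (T : finType) (f : T -> T).

Lemma iter_order_periodic x n : 0 < n -> iter n f x = x -> iter (order f x) f x = x.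
Proof. by case: n => // n _ fnx; apply/(orbitPcycle 3 4); exists n. Qed.

Lemma order_dvdn x n : iter n f x = x -> order f x %| n.
Proof.
case: n => [|n] fnx; first exact: dvdn0.
set o := order f x.
have fox : iter o f x = x by apply: iter_order_periodic fnx.
have frx : iter (n.+1 %% o) f x = x.
  by rewrite -[RHS]fnx [in RHS](divn_eq n.+1 o) addnC iterD iterM (iter_fix _ fox).
by rewrite /dvdn -(findex_iter (ltn_pmod n.+1 (order_gt0 f x))) frx findex0.
Qed.

Lemma order_periodicP x n : 0 < n -> iter n f x = x ->
  order f x = n <-> forall j, 0 < j < n -> j %| n -> iter j f x <> x.
Proof.
move=> n_gt0 fnx; split=> [<- j /andP[j_gt0 lt_jn] _ /order_dvdn | no_proper_period].
  by move/(dvdn_leq j_gt0); rewrite leqNgt lt_jn.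
have o_dvd_n := order_dvdn fnx.
apply/eqP; rewrite eqn_leq dvdn_leq //= leqNgt; apply/negP => lt_on.
apply: (no_proper_period (order f x)) => //; last exact: iter_order_periodic fnx.
by rewrite order_gt0.
Qed.

Lemma full_cycle_orbit x : fcycle f (orbit f x) -> order f x = #|T| ->
  injective f /\ forall y, order f y = #|T|.
Proof.
move=> cyc_x o_x.
have orbit_full : orbit f x =i predT.
  apply/subset_cardP; last exact/subsetP.
  by rewrite (card_uniqP (orbit_uniq f x)) size_orbit o_x.
split=> [y z | y]; first by apply: (inj_cycle cyc_x); rewrite orbit_full.
by rewrite (order_cycle cyc_x) ?size_orbit ?orbit_full.
Qed.

End PeriodicPoint.

Lemma hamiltonian_cycleP N (pi : 'I_N -> 'I_N) x :
  hamiltonian_cycle pi <-> iter N pi x = x /\ order pi x = N.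
Proof.
split=> [[inj_pi order_pi] | [piNx order_x]].
  by split; rewrite ?order_pi // -[X in iter X](order_pi x) iter_order.
have cycle_x : fcycle pi (orbit pi x) by apply/(orbitPcycle 4 0); rewrite order_x.
have [|inj_pi order_pi] := full_cycle_orbit cycle_x; first by rewrite card_ord.
by split=> // y; rewrite order_pi card_ord.
Qed.

Theorem theorem2 (N : nat) (hN : 0 < N) (pi : 'I_N -> 'I_N) :
  hamiltonian_cycle pi <->
  ((forall j : nat, 1 <= j <= N - 1 -> j %| N ->
      iter j pi (Ordinal hN) <> Ordinal hN) /\
   iter N pi (Ordinal hN) = Ordinal hN).
Proof.
apply: iff_trans (hamiltonian_cycleP _ (Ordinal hN)) _.
have lt_N j : (0 < j < N) = (1 <= j <= N - 1) by rewrite leq_subRL.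
split=> [[piNx /(order_periodicP hN piNx) no_return] | [no_return piNx]].
  by split=> // j; rewrite -lt_N; apply: no_return.
by split=> //; apply/(order_periodicP hN piNx) => j; rewrite lt_N; apply: no_return.
Qed.
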